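(* Let $\mathcal{H}$ be a $k$-uniform hypergraph with vertex degrees $d_i$. Then \[ \rho(\mathcal{Q}(\mathcal{H}))\leq\max_{e\in E(\mathcal{H})}\max_{\{i,j\}\subseteq e}(d_{i}+d_{j}). \]
   Context: A $k$-uniform hypergraph $\mathcal{H}$ on vertex set $[n]$ has edges that are $k$-element subsets of $[n]$; $d_i$ is the number of edges containing vertex $i$. The adjacency tensor $\mathcal{A}(\mathcal{H})$ has entries $\mathcal{A}_{i_1\cdots i_k}=\frac{1}{(k-1)!}$ if $\{i_1,\dots,i_k\}\in E(\mathcal{H})$ and $0$ otherwise; $\mathcal{D}(\mathcal{H})$ is the diagonal tensor with $\mathcal{D}_{i\cdots i}=d_i$; $\mathcal{Q}(\mathcal{H})=\mathcal{D}(\mathcal{H})+\mathcal{A}(\mathcal{H})$ is the signless Laplacian tensor. For a tensor $\mathcal{T}$ and $x\in\mathbb{C}^n$, $(\mathcal{T}x)_i=\sum_{i_2,\dots,i_k}\mathcal{T}_{ii_2\cdots i_k}x_{i_2}\cdots x_{i_k}$; $\lambda$ is an eigenvalue if $\mathcal{T}x=\lambda x^{[k-1]}$ for some nonzero $x$, where $x^{[k-1]}=(x_1^{k-1},\dots,x_n^{k-1})^T$; $\rho(\mathcal{T})$ is the maximum modulus of eigenvalues. *)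

From mathcomp Require Import all_boot all_order all_algebra.
Set Implicit Arguments. Unset Strict Implicit. Unset Printing Implicit Defensive.
Import Order.TTheory GRing.Theory Num.Theory.
Local Open Scope ring_scope.

Definition uniform_hypergraph (n k : nat) (E : {set {set 'I_n}}) : Prop :=
  forall e, e \in E -> #|e| = k.

Definition hdeg (n : nat) (E : {set {set 'I_n}}) (i : 'I_n) : nat :=
  #|[set e in E | i \in e]|.

(* An order-k, dimension-n tensor over C: entries T (i_1 :: ... :: i_k),
   indexed by index sequences (only sequences of length k are used). *)
Definition tensor (C : Type) (n : nat) := seq 'I_n -> C.

Definition adj_tensor (C : numClosedFieldType) (n k : nat) (E : {set {set 'I_n}})
  : tensor C n :=
  fun s => if (size s == k) && ([set x in s] \in E) then (k.-1)`!%:R^-1 else 0.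

Definition deg_tensor (C : numClosedFieldType) (n k : nat) (E : {set {set 'I_n}})
  : tensor C n :=
  fun s => if s is i :: t then
             (if (size s == k) && all (fun j => j == i) t then (hdeg E i)%:R else 0)
           else 0.

Definition signless_laplacian (C : numClosedFieldType) (n k : nat)
  (E : {set {set 'I_n}}) : tensor C n :=
  fun s => deg_tensor C k E s + adj_tensor C k E s.

Definition tensor_apply (C : numClosedFieldType) (n k : nat) (T : tensor C n)
  (x : 'I_n -> C) (i : 'I_n) : C :=
  \sum_(t : (k.-1).-tuple 'I_n) T (i :: val t) * \prod_(j <- val t) x j.

Definition tensor_eigenvalue (C : numClosedFieldType) (n k : nat) (T : tensor C n)
  (lambda : C) : Prop :=
  exists x : 'I_n -> C, (exists i, x i != 0) /\
    forall i, tensor_apply k T x i = lambda * x i ^+ k.-1.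

(* max over edges e, over 2-subsets {i,j} of e (i <> j), of d_i + d_j;
   0 if there are no edges *)
Definition pair_degree_bound (n : nat) (E : {set {set 'I_n}}) : nat :=
  \max_(e in E) \max_(i in e) \max_(j in e | j != i) (hdeg E i + hdeg E j)%N.

From mathcomp Require Import all_boot all_order all_algebra.
Import Order.TTheory GRing.Theory Num.Theory.
Local Open Scope ring_scope.

(* Let x be an eigenvector for lambda, u a vertex where |x| is maximal and v a
   neighbour of u where |x| is maximal among the neighbours of u.  Vertex i
   lies in d_i edges, and the (k-1)! orderings of each of them cancel the weight
   1/(k-1)! of the adjacency tensor, so the eigen-equations at u and v give
     |lambda - d_u| |x_u|^(k-1) <= d_u |x_v|^(k-1),
     |lambda - d_v| |x_v|^(k-1) <= d_v |x_u|^(k-1).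
   Multiplying, |lambda - d_u| |lambda - d_v| <= d_u d_v, which forces
   |lambda| <= d_u + d_v. *)

Lemma uniform_edge_uniq {n k : nat} {E : {set {set 'I_n}}} {s : seq 'I_n} :
  uniform_hypergraph k E -> size s = k -> [set y in s] \in E -> uniq s.
Proof. by move=> hu hs hE; apply/card_uniqP; rewrite -cardsE hu. Qed.

Lemma exists_max_over {T : finType} {R : numDomainType} (P : pred T)
    (f : T -> R) {x0 : T} :
  (forall x, 0 <= f x) -> P x0 -> exists2 u, P u & forall x, P x -> f x <= f u.
Proof.
move=> f_ge0 Px0.
suff [u] : exists2 u, u \in enum P & forall x, x \in enum P -> f x <= f u.
  by rewrite mem_enum => uP umax; exists u => // x xP; apply: umax; rewrite mem_enum.
have : enum P != [::] by apply: contraTneq Px0 => eP; rewrite -[P x0]/(x0 \in P) -mem_enum eP.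
elim: (enum P) => // a s IH _.
case: s IH => [|b s] IH.
  by exists a => [|x]; rewrite ?mem_head // inE => /eqP ->.
have [w ws wmax] := IH isT.
have [fa_le|fw_le] := orP (real_leVge (ger0_real (f_ge0 a)) (ger0_real (f_ge0 w))).
  exists w; first by rewrite in_cons ws orbT.
  by move=> x; rewrite in_cons => /orP[/eqP -> | /wmax].
exists a; first exact: mem_head.
by move=> x; rewrite in_cons => /orP[/eqP -> // | /wmax /le_trans]; apply.
Qed.

Lemma prod_le_of_cross_bounds (R : numDomainType) (p q a b c d : R) :
  0 <= p -> 0 <= q -> 0 <= c -> 0 <= d -> 0 < a -> 0 <= b ->
  p * a <= c * b -> q * b <= d * a -> p * q <= c * d.
Proof.
move=> p0 q0 c0 d0 a0; rewrite le_eqVlt => /orP[/eqP b_eq0 | b_gt0] hpa hqb.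
  move: hpa; rewrite -b_eq0 mulr0 pmulr_lle0 // => p_le0.
  have -> : p = 0 by apply/le_anti; rewrite p_le0 p0.
  by rewrite mul0r mulr_ge0.
have : (p * a) * (q * b) <= (c * b) * (d * a) by rewrite ler_pM ?mulr_ge0 // ltW.
by rewrite mulrACA [X in _ <= X]mulrACA [b * a]mulrC ler_pM2r // mulr_gt0.
Qed.

Lemma norm_le_add_of_dist_prod_le (C : numDomainType) (lambda c d : C) :
  0 <= c -> 0 <= d -> `|lambda - c| * `|lambda - d| <= c * d ->
  `|lambda| <= c + d.
Proof.
move=> c0 d0 hprod; rewrite real_leNgt ?realD ?ger0_real //; apply/negP => hlt.
have dist_ge (e : C) : 0 <= e -> `|lambda| - e <= `|lambda - e|.
  by move=> e0; move: (lerB_normD lambda (- e)); rewrite normrN (ger0_norm e0).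
have : d * c < `|lambda - c| * `|lambda - d|.
  apply: lt_le_trans (_ : (`|lambda| - c) * (`|lambda| - d) <= _).
    by rewrite ltr_pM // ?ltrBrDr // addrC.
  by rewrite ler_pM ?dist_ge // subr_ge0 ltW // (le_lt_trans _ hlt) // ?lerDl ?lerDr.
by rewrite mulrC => /lt_le_trans /(_ hprod); rewrite ltxx.
Qed.

Definition hneighbour {n : nat} (E : {set {set 'I_n}}) (i j : 'I_n) : bool :=
  [exists e in E, [&& i \in e, j \in e & j != i]].

Lemma pair_degree_bound_ge {n : nat} {E : {set {set 'I_n}}} {u v : 'I_n} :
  hneighbour E u v -> (hdeg E u + hdeg E v <= pair_degree_bound E)%N.
Proof.
case/existsP=> e /and4P[eE ue ve vu].
apply: leq_trans (leq_bigmax_cond _ eE); apply: leq_trans (leq_bigmax_cond _ ue).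
by apply: (leq_bigmax_cond (P := fun j => (j \in e) && (j != u))); rewrite ve vu.
Qed.

Lemma hdeg_gt0_hneighbour {n k : nat} {E : {set {set 'I_n}}} {u : 'I_n} :
  (1 < k)%N -> uniform_hypergraph k E -> (0 < hdeg E u)%N ->
  exists v, hneighbour E u v.
Proof.
move=> k_gt1 E_uniform /card_gt0P[e /[!inE] /andP[eE ue]].
have [v /[!inE] /andP[vu ve]] : exists v, v \in e :\ u.
  apply/card_gt0P; have := E_uniform e eE.
  by rewrite (cardsD1 u) ue add1n => card_e; rewrite -ltnS card_e.
by exists v; apply/existsP; exists e; rewrite eE ue ve vu.
Qed.

Section SignlessLaplacianEquation.

Variables (C : numClosedFieldType) (n k : nat) (E : {set {set 'I_n}}).
Hypotheses (k_gt0 : (0 < k)%N) (E_uniform : uniform_hypergraph k E).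

Let size_cons_tuple (i : 'I_n) (t : (k.-1).-tuple 'I_n) : size (i :: val t) = k.
Proof. by rewrite /= size_tuple prednK. Qed.

(* Every edge e through i is the support of exactly (k-1)! tuples i :: t,
   namely the orderings of e :\ i. *)
Lemma card_edge_tuples_le (i : 'I_n) :
  (#|[set t : (k.-1).-tuple 'I_n | [set y in i :: val t] \in E]|
     <= hdeg E i * (k.-1)`!)%N.
Proof.
rewrite -sum1dep_card (partition_big (fun t : (k.-1).-tuple 'I_n => [set y in i :: val t])
           (fun e => (e \in E) && (i \in e))) /=; last first.
  by move=> t ->; rewrite inE mem_head.
rewrite /hdeg -sum_nat_const big_set /=.
apply: leq_sum => e /andP[eE ie].
rewrite sum1dep_card.
have -> : (k.-1)`! = #|[set t : (k.-1).-tuple 'I_n | all (mem (e :\ i)) t & uniq t]|.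
  have : #|e| = k by apply: E_uniform.
  by rewrite card_uniq_tuples (cardsD1 i) ie add1n => <- /=; rewrite ffactnn.
apply/subset_leq_card/subsetP => t /[!inE] /andP[tE /eqP et].
have := uniform_edge_uniq E_uniform (size_cons_tuple i t) tE.
rewrite cons_uniq => /andP[i_notin_t t_uniq].
rewrite t_uniq andbT; apply/allP => j jt.
by rewrite !inE -et inE /= in_cons jt orbT andbT; apply: contraNneq i_notin_t => <-.
Qed.

Lemma tensor_apply_signless_laplacian (x : 'I_n -> C) (i : 'I_n) :
  tensor_apply k (signless_laplacian C k E) x i =
  tensor_apply k (deg_tensor C k E) x i + tensor_apply k (adj_tensor C k E) x i.
Proof. by rewrite -big_split; apply: eq_bigr => t _; rewrite mulrDl. Qed.

Lemma tensor_apply_deg_tensor (x : 'I_n -> C) (i : 'I_n) :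
  tensor_apply k (deg_tensor C k E) x i = (hdeg E i)%:R * x i ^+ k.-1.
Proof.
rewrite /tensor_apply (bigD1 (nseq_tuple k.-1 i)) //= [X in _ + X]big1 ?addr0.
  rewrite /deg_tensor /= size_nseq prednK // eqxx /=.
  have -> : all (fun j => j == i) (nseq k.-1 i) by apply/all_pred1P; rewrite size_nseq.
  by rewrite big_nseq iter_mulr_1.
move=> t t_neq; rewrite /deg_tensor /= size_tuple prednK // eqxx /=.
case: ifP => [/all_pred1P t_const | _]; last by rewrite mul0r.
by case/eqP: t_neq; apply: val_inj; rewrite /= t_const size_tuple.
Qed.

Lemma norm_tensor_apply_adj_tensor_le (x : 'I_n -> C) (i : 'I_n) (M : C) :
  0 <= M ->
  (forall j, hneighbour E i j -> `|x j| <= M) ->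
  `|tensor_apply k (adj_tensor C k E) x i| <= (hdeg E i)%:R * M ^+ k.-1.
Proof.
move=> M0 xM.
set c : C := (k.-1)`!%:R^-1.
have c0 : 0 <= c by rewrite invr_ge0 ler0n.
apply: le_trans (ler_norm_sum _ _ _) _.
apply: (@le_trans _ _ (\sum_(t : (k.-1).-tuple 'I_n)
   (if [set y in i :: val t] \in E then c * M ^+ k.-1 else 0))).
  apply: ler_sum => t _.
  rewrite /adj_tensor size_cons_tuple eqxx /=.
  case: ifP => tE; last by rewrite mul0r normr0.
  rewrite normrM ger0_norm // ler_wpM2l // normr_prod.
  have /andP[/= i_notin_t _] := uniform_edge_uniq E_uniform (size_cons_tuple i t) tE.
  have <- : \prod_(j <- val t) M = M ^+ k.-1.
    by rewrite big_const_seq count_predT size_tuple iter_mulr_1.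
  rewrite big_seq [X in _ <= X]big_seq; apply: ler_prod => j jt.
  rewrite normr_ge0 xM //; apply/existsP; exists [set y in i :: val t].
  rewrite tE !inE eqxx jt orbT /=.
  by apply: contraNneq i_notin_t => <-.
rewrite -big_mkcond sumr_const -[X in X <= _]mulr_natr [X in X <= _]mulrAC.
apply: ler_wpM2r; first exact: exprn_ge0.
apply: (@le_trans _ _ (c * (hdeg E i * (k.-1)`!)%N%:R)).
  by rewrite ler_wpM2l // ler_nat -cardsE card_edge_tuples_le.
by rewrite natrM mulrCA mulVf ?mulr1 // pnatr_eq0 -lt0n fact_gt0.
Qed.

Lemma eigen_dist_deg_le (x : 'I_n -> C) (lambda M : C) (i : 'I_n) :
  0 <= M ->
  (forall j, hneighbour E i j -> `|x j| <= M) ->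
  tensor_apply k (signless_laplacian C k E) x i = lambda * x i ^+ k.-1 ->
  `|lambda - (hdeg E i)%:R| * `|x i| ^+ k.-1 <= (hdeg E i)%:R * M ^+ k.-1.
Proof.
move=> M0 xM; rewrite tensor_apply_signless_laplacian tensor_apply_deg_tensor => eq_i.
rewrite -normrX -normrM.
have -> : (lambda - (hdeg E i)%:R) * x i ^+ k.-1 = tensor_apply k (adj_tensor C k E) x i.
  by rewrite mulrBl -eq_i addrAC subrr add0r.
exact: norm_tensor_apply_adj_tensor_le.
Qed.

End SignlessLaplacianEquation.

Theorem corollary2p2 (C : numClosedFieldType) (n k : nat) (E : {set {set 'I_n}}) :
  (2 <= k)%N -> uniform_hypergraph k E ->
  forall lambda : C, tensor_eigenvalue k (signless_laplacian C k E) lambda ->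
    `|lambda| <= (pair_degree_bound E)%:R.
Proof.
move=> k_gt1 E_uniform lambda [x [[i0 x_i0] eigen]].
have k_gt0 : (0 < k)%N by apply: ltnW.
have eigen_le (M : C) (i : 'I_n) : 0 <= M -> (forall j, hneighbour E i j -> `|x j| <= M) ->
    `|lambda - (hdeg E i)%:R| * `|x i| ^+ k.-1 <= (hdeg E i)%:R * M ^+ k.-1.
  by move=> M0 xM; apply: eigen_dist_deg_le.
have [u _ umax] := exists_max_over predT (fun j => `|x j|) (fun=> normr_ge0 _) (isT : predT i0).
have xu_gt0 : 0 < `|x u| ^+ k.-1.
  by rewrite exprn_gt0 // (lt_le_trans _ (umax i0 isT)) // normr_gt0.
have [du_eq0 | du_gt0] := posnP (hdeg E u).
  have := eigen_le _ u (normr_ge0 (x u)) (fun j _ => umax j isT).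
  rewrite du_eq0 subr0 mul0r pmulr_lle0 // => /le_trans; apply.
  by rewrite ler0n.
have [v0 uv0] := hdeg_gt0_hneighbour k_gt1 E_uniform du_gt0.
have [v uv vmax] := exists_max_over (hneighbour E u) (fun j => `|x j|) (fun=> normr_ge0 _) uv0.
apply: (@le_trans _ _ ((hdeg E u)%:R + (hdeg E v)%:R)).
  apply: norm_le_add_of_dist_prod_le; rewrite ?ler0n //.
  apply: (@prod_le_of_cross_bounds _ _ _ (`|x u| ^+ k.-1) (`|x v| ^+ k.-1));
    rewrite ?normr_ge0 ?ler0n ?exprn_ge0 //.
  - exact: eigen_le (normr_ge0 _) vmax.
  - exact: eigen_le (normr_ge0 _) (fun j _ => umax j isT).
by rewrite -natrD ler_nat pair_degree_bound_ge.
Qed.
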